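(* Let $P$ be a polygon with vertex set $V$ and a non-empty dissection $D$, and let $d=\{\zeta,\eta\}\in D$ be such that $D = \{d\}\cup D_2$ where $D_2$ is a dissection of the subpolygon with vertex set $V_2 = \{\varepsilon \in V : \eta \le \varepsilon \le \zeta\}$. Let $U_1 = \{\varepsilon\in V : \zeta<\varepsilon<\eta\}$ and $U_2 = \{\varepsilon\in V : \eta<\varepsilon<\zeta\}$. Let $\alpha \in U_1$, $\beta \in U_2$, and let $\pi = (\pi_1,\dots,\pi_p) \in \mathcal{T}_{P,D}(\alpha,\beta)$ with $p\ge 3$, $\pi_2 = \zeta$ and $\pi_3 \neq \eta$. Then $\eta < \pi_i \le \zeta$ (i.e. $\pi_i \in U_2\cup\{\zeta\}$) for all $i \ge 2$.
   Context: A polygon is a finite set $V$ of at least three vertices with a cyclic order, pictured as a convex polygon in the plane with vertices anticlockwise. ''$a\le\varepsilon\le b$'' means $\varepsilon$ lies on the cyclic interval from $a$ to $b$ in the positive direction, endpoints included; ''$<$'' excludes the corresponding endpoint. A subpolygon is a subset of at least three vertices with induced cyclic order. A diagonal is a two-element subset of $V$ (edges included); non-edges are internal. Diagonals cross if they consist of four distinct vertices $\alpha,\beta,\gamma,\delta$ appearing cyclically as $\alpha,\gamma,\beta,\delta$ or $\alpha,\delta,\beta,\gamma$. A dissection is a set of pairwise non-crossing internal diagonals. For vertices $\pi_1\neq\pi_p$, a $T$-path from $\pi_1$ to $\pi_p$ w.r.t. $D$ is a tuple $(\pi_1,\dots,\pi_p)$ of vertices with: (i) $\{\pi_1,\pi_2\},\dots,\{\pi_{p-1},\pi_p\}$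 pairwise different diagonals; (ii) no $\{\pi_i,\pi_{i+1}\}$ crosses a diagonal of $D$; (iii) each $\{\pi_{2j},\pi_{2j+1}\}$ lies in $D$, and these cross the segment $\{\pi_1,\pi_p\}$ at pairwise different points progressing monotonically from $\pi_1$ to $\pi_p$. $\mathcal{T}_{P,D}(\alpha,\beta)$ is the set of such paths from $\alpha$ to $\beta$. *)

(* Polygon with n >= 3 vertices modelled as 'I_n with the
   standard cyclic (anticlockwise) order 0,1,...,n-1,0. *)
From mathcomp Require Import all_boot.
Set Implicit Arguments. Unset Strict Implicit. Unset Printing Implicit Defensive.

Section Polygon.
Variable n : nat.
Local Notation V := 'I_n.

(* a <= e <= b : e lies on the cyclic interval from a to b (positive
   direction), endpoints included. *)
Definition cyc_le (a e b : V) : bool :=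
  (e + n - a) %% n <= (b + n - a) %% n.

Definition cyc_lt (a e b : V) : bool := [&& e != a, e != b & cyc_le a e b].
Definition cyc_lt_le (a e b : V) : bool := (e != a) && cyc_le a e b.

Definition diag (d : {set V}) : Prop := #|d| = 2.

Definition crosses (d1 d2 : {set V}) : Prop :=
  exists al be ga de : V,
    [/\ d1 = [set al; be], d2 = [set ga; de],
        uniq [:: al; be; ga; de] &
        (cyc_lt al ga be && cyc_lt be de al) ||
        (cyc_lt al de be && cyc_lt be ga al)].

Definition edge_of (W : {set V}) (d : {set V}) : Prop :=
  exists x y : V, [/\ d = [set x; y], x \in W, y \in W, x != y &
    (forall z, z \in W -> ~~ cyc_lt x z y)].

Definition internal_diag_of (W : {set V}) (d : {set V}) : Prop :=
  [/\ diag d, d \subset W & ~ edge_of W d].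

Definition dissection_of (W : {set V}) (D : {set {set V}}) : Prop :=
  (forall d, d \in D -> internal_diag_of W d) /\
  (forall d1 d2, d1 \in D -> d2 \in D -> ~ crosses d1 d2).

(* For diagonals e1, e2 (both crossing the segment {al, be}) which do not
   cross each other, the crossing point of e1 with the segment is strictly
   closer to al than that of e2: e2 lies on the be-side of e1. *)
Definition cross_before (al be : V) (e1 e2 : {set V}) : Prop :=
  exists a1 b1 a2 b2 : V,
    [/\ e1 = [set a1; b1], e2 = [set a2; b2], e1 != e2,
        [&& cyc_lt al a1 be, cyc_lt be b1 al, cyc_lt al a2 be & cyc_lt be b2 al] &
        cyc_le a1 a2 be && cyc_le be b2 b1].

(* The path pi = (pi_1, ..., pi_p) is stored as a sequence; pi_(i+1) is
   nth al pi i (0-indexed).  step i = {pi_(i+1), pi_(i+2)}. *)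
Definition step (al : V) (pi : seq V) (i : nat) : {set V} :=
  [set nth al pi i; nth al pi i.+1].

Definition Tpath (D : {set {set V}}) (al be : V) (pi : seq V) : Prop :=
  [/\ al != be, 2 <= size pi, nth al pi 0 = al & nth al pi (size pi).-1 = be] /\
  [/\
   ((forall i, i < (size pi).-1 -> nth al pi i != nth al pi i.+1) /\
   (forall i j, i < (size pi).-1 -> j < (size pi).-1 -> i != j ->
      step al pi i != step al pi j)),
   (forall i d, i < (size pi).-1 -> d \in D -> ~ crosses (step al pi i) d) &
   ((
   (* (iii) the even (1-indexed) steps, i.e. 0-indexed odd steps, lie in D,
      cross the segment {pi_1, pi_p}, at points progressing monotonically *)
   forall i, i < (size pi).-1 -> odd i ->
      step al pi i \in D /\ crosses (step al pi i) [set al; be]) /\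
   (forall i j, j < (size pi).-1 -> odd i -> odd j -> i < j ->
      cross_before al be (step al pi i) (step al pi j)))].

End Polygon.

(* Since pi_3 <> eta, the step {pi_2, pi_3} = {zeta, pi_3} is not d, so it is a diagonal
   of D2 and pi_3 lies on the closed arc from eta to zeta.  This step crosses the segment
   {alpha, beta}, and zeta lies on the beta-to-alpha side, so pi_3 is on the alpha-to-beta
   side, i.e. strictly between eta and beta.  Every later step of D on the path crosses the
   segment nearer to beta, so it has one end on the arc from pi_3 to beta and the other on
   the arc from beta to zeta.  Every pi_i with i >= 2 is an end of one of these steps, or
   is beta itself. *)

From mathcomp Require Import all_boot zify.
Set Implicit Arguments. Unset Strict Implicit.

Lemma cyc_leE n (a e b : 'I_n) :
  cyc_le a e b = if a <= b then (a <= e) && (e <= b) else (a <= e) || (e <= b).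
Proof.
have := ltn_ord a; have := ltn_ord b; have := ltn_ord e.
rewrite /cyc_le; move: (nat_of_ord a) (nat_of_ord b) (nat_of_ord e) => {}a {}b {}e ha hb he.
have dist_from_a x : x < n -> (x + n - a) %% n = if a <= x then x - a else x + n - a.
  move=> hx; case: (leqP a x) => ax.
    by rewrite -addnBAC // modnDr modn_small //; lia.
  by rewrite modn_small //; lia.
by rewrite !dist_from_a //; case: (leqP a b); case: (leqP a e); lia.
Qed.

(* After cyc_leE, cyclic-order facts are linear arithmetic on the vertices as naturals. *)
Ltac cyc_lia :=
  repeat match goal with H : is_true _ |- _ => revert H end;
  rewrite /cyc_lt_le /cyc_lt ?cyc_leE -?val_eqE /=;
  repeat match goal with x : ordinal _ |- _ => generalize (nat_of_ord x); clear x; intro x end;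
  repeat match goal with |- context [if ?a <= ?b then _ else _] => case: (leqP a b) end;
  lia.

Lemma cyc_lt_sides n (a b x : 'I_n) : cyc_lt a x b -> ~~ cyc_lt b x a.
Proof. by cyc_lia. Qed.

Section Configuration.
Variables (n : nat) (zeta eta alpha beta : 'I_n).
Hypotheses (alpha_U1 : cyc_lt zeta alpha eta) (beta_U2 : cyc_lt eta beta zeta).

(* The suffix U2z refers to U2 :|: [set zeta], the half-open arc (eta, zeta]. *)

Lemma zeta_far_side : cyc_lt beta zeta alpha.
Proof. by cyc_lia. Qed.

Lemma beta_U2z : cyc_lt_le eta beta zeta.
Proof. by cyc_lia. Qed.

Lemma zeta_U2z : cyc_lt_le eta zeta zeta.
Proof. by cyc_lia. Qed.

Lemma cyc_lt_eta_beta g :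
  cyc_lt alpha g beta -> cyc_le eta g zeta -> g != eta -> cyc_lt eta g beta.
Proof. by cyc_lia. Qed.

Lemma arc_to_beta_U2z g x : cyc_lt eta g beta -> cyc_le g x beta -> cyc_lt_le eta x zeta.
Proof. by cyc_lia. Qed.

Lemma arc_from_beta_U2z x : cyc_le beta x zeta -> cyc_lt_le eta x zeta.
Proof. by cyc_lia. Qed.

Lemma cross_before_from_zeta g e :
  cyc_le eta g zeta -> g != eta -> cross_before alpha beta [set zeta; g] e ->
  forall x, x \in e -> cyc_lt_le eta x zeta.
Proof.
move=> g_V2 g_ne_eta [a1 [b1 [a2 [b2 [E1 -> _ /and4P[a1_near b1_far _ _] /andP[a2_arc b2_arc]]]]]].
have a1_g : a1 = g.
  have : a1 \in [set zeta; g] by rewrite E1 set21.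
  case/set2P=> // a1_zeta; move: (cyc_lt_sides zeta_far_side).
  by rewrite -a1_zeta a1_near.
have b1_zeta : b1 = zeta.
  have : b1 \in [set zeta; g] by rewrite E1 set22.
  case/set2P=> // b1_g; move: (cyc_lt_sides a1_near).
  by rewrite a1_g -b1_g b1_far.
subst a1 b1; have g_near := cyc_lt_eta_beta a1_near g_V2 g_ne_eta.
move=> x /set2P[->|->]; first exact: arc_to_beta_U2z g_near a2_arc.
exact: arc_from_beta_U2z.
Qed.

End Configuration.

Lemma nth_in_odd_step n (x : 'I_n) s i :
  0 < i < (size s).-1 -> exists2 j, odd j && (j < (size s).-1) & nth x s i \in step x s j.
Proof.
case/andP=> i_gt0 i_lt; case odd_i: (odd i).
  by exists i; rewrite ?odd_i ?i_lt // /step set21.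
case: i i_gt0 i_lt odd_i => // i _ i_lt /= /negbFE odd_i.
by exists i; [rewrite odd_i ltnW | rewrite /step set22].
Qed.

Theorem lemma3p6 (n : nat) (hn : 3 <= n) (D D2 : {set {set 'I_n}})
  (zeta eta : 'I_n) :
  dissection_of [set: 'I_n] D -> D != set0 ->
  [set zeta; eta] \in D ->
  D = [set [set zeta; eta]] :|: D2 ->
  dissection_of [set e | cyc_le eta e zeta] D2 ->
  forall (alpha beta : 'I_n) (pi : seq 'I_n),
    cyc_lt zeta alpha eta ->
    cyc_lt eta beta zeta ->
    Tpath D alpha beta pi ->
    3 <= size pi ->
    nth alpha pi 1 = zeta ->
    nth alpha pi 2 != eta ->
    forall i, 1 <= i < size pi -> cyc_lt_le eta (nth alpha pi i) zeta.
Proof.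
move=> _ _ _ D_eq [D2_diags _] al be pi al_U1 be_U2
  [[_ _ _ pi_last] [[pi_nondeg _] _ [odd_steps cross_mono]]] size_pi pi1 g_ne_eta i i_range.
set g := nth al pi 2 in g_ne_eta *.
have step1 : step al pi 1 = [set zeta; g] by rewrite /step pi1.
have g_ne_zeta : g != zeta by rewrite eq_sym -pi1 pi_nondeg //; lia.
have g_V2 : cyc_le eta g zeta.
  have [] := odd_steps 1 ltac:(lia) isT; rewrite D_eq step1 in_setU in_set1.
  case/orP=> [/eqP step1_d | step1_D2] _.
    have : g \in [set zeta; eta] by rewrite -step1_d set22.
    by case/set2P=> g_eq; [move: g_ne_zeta | move: g_ne_eta]; rewrite g_eq eqxx.
  have [_ /subsetP/(_ g (set22 _ _)) + _] := D2_diags _ step1_D2.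
  by rewrite inE.
have odd_step_U2z j x :
    odd j -> j < (size pi).-1 -> x \in step al pi j -> cyc_lt_le eta x zeta.
  move=> odd_j j_lt; case: (ltngtP j 1) => [j_lt1|j_gt1|j1]; first by case: j odd_j j_lt1 {j_lt}.
    have := cross_mono 1 j j_lt isT odd_j j_gt1; rewrite step1.
    by move/(cross_before_from_zeta al_U1 be_U2 g_V2 g_ne_eta); apply.
  rewrite j1 step1 => /set2P[->|->]; first exact: zeta_U2z al_U1 be_U2.
  by rewrite /cyc_lt_le g_ne_eta.
have [->|i_not_last] := eqVneq i (size pi).-1; first by rewrite pi_last (beta_U2z al_U1 be_U2).
have [|j /andP[odd_j j_lt]] := @nth_in_odd_step _ al pi i; first lia.
exact: odd_step_U2z.
Qed.
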